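(* (i) For any $\Gamma\cup\{A\}\subseteq\mathcal{L}_\infty$, if $\Gamma\vdash_{\mathbf{GL}_h}A$ then $\Gamma^f\vdash_{\mathbf{GL}}A^f$. (ii) For any set $\Gamma\cup\{A\}$ of formulas of the ordinary unimodal language $\mathcal{L}_\Box$ and any witnesses $v$ for $\Gamma$ and $w$ for $A$, if $\Gamma\vdash_{\mathbf{GL}}A$ then $\Gamma(v)\vdash_{\mathbf{GL}_h}A(w)$.
   Context: The language $\mathcal{L}_\infty$ consists of modal formulas built from propositional atoms, $\bot,\top$, the connectives $\neg,\wedge,\vee,\rightarrow$ and unary modalities $\Box_n$ ($n\in\mathbb{N}$), with the restriction that $\Box_n A$ is a formula only if $n$ is strictly greater than the index of every box occurring in $A$. Axiom instances are only those that are $\mathcal{L}_\infty$-formulas. Axiom schemes (for all $n\ge0$): $\mathbf{H}$: $\Box_n A\rightarrow\Box_{n+1}A$; $\mathbf{K}_h$: $\Box_n(A\rightarrow B)\rightarrow(\Box_nA\rightarrow\Box_nB)$; $\mathbf{4}_h$: $\Box_nA\rightarrow\Box_{n+1}\Box_nA$; $\mathbf{L}_h$: $\Box_{n+1}(\Box_nA\rightarrow A)\rightarrow\Box_nA$. $\mathbf{GL}_h$ is the least set of $\mathcal{L}_\infty$-formulas containing all classical propositional tautologies and all instances of $\mathbf{H},\mathbf{K}_h,\mathbf{4}_h,\mathbf{L}_h$, closed under modus ponens and the rule: from $A$ infer $\Box_nA$ for any $n$ greater than all box indices in $A$. $\mathbf{GL}$ is the usual Gödel–Löb provability logic in $\mathcal{L}_\Box$,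 the usual modal language with one modality $\Box$. For a logic $L$ and a set $\Gamma$, $\Gamma\vdash_LA$ means $\bigwedge\Delta\rightarrow A\in L$ for some finite $\Delta\subseteq\Gamma$. The forgetful translation $f:\mathcal{L}_\infty\to\mathcal{L}_\Box$ fixes atoms, commutes with the connectives and sends every $\Box_n$ to $\Box$; $\Gamma^f=\{B^f:B\in\Gamma\}$. A witness for $A\in\mathcal{L}_\Box$ is an assignment of a natural number to each occurrence of $\Box$ in $A$ such that the number assigned to each occurrence is strictly greater than the numbers assigned to all box occurrences inside its scope. For a witness $w$ of $A$, $A(w)\in\mathcal{L}_\infty$ is obtained by replacing each occurrence of $\Box$ by $\Box_n$ with $n$ its assigned number. A witness $v$ for a set $\Gamma$ is a family assigning a witness $v_B$ to each $B\in\Gamma$, and $\Gamma(v)=\{B(v_B):B\in\Gamma\}$. *)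

From Stdlib Require Import List Arith.
Import ListNotations.

Inductive form : Type :=
| FAtom : nat -> form
| FBot : form
| FTop : form
| FNeg : form -> form
| FAnd : form -> form -> form
| FOr : form -> form -> form
| FImp : form -> form -> form
| FBox : form -> form.

(* Raw syntax with indexed boxes; L_infty = the well-formed ones (hwf). *)
Inductive hform : Type :=
| HAtom : nat -> hform
| HBot : hform
| HTop : hform
| HNeg : hform -> hform
| HAnd : hform -> hform -> hform
| HOr : hform -> hform -> hform
| HImp : hform -> hform -> hform
| HBox : nat -> hform -> hform.

Fixpoint boxes_below (n : nat) (A : hform) : Prop :=
  match A with
  | HAtom _ | HBot | HTop => True
  | HNeg B => boxes_below n B
  | HAnd B C | HOr B C | HImp B C => boxes_below n B /\ boxes_below n C
  | HBox m B => m < n /\ boxes_below n B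
  end.

Fixpoint hwf (A : hform) : Prop :=
  match A with
  | HAtom _ | HBot | HTop => True
  | HNeg B => hwf B
  | HAnd B C | HOr B C | HImp B C => hwf B /\ hwf C
  | HBox m B => boxes_below m B /\ hwf B
  end.

(* Classical propositional tautologies: true under every valuation treating
   atoms and boxed formulas as propositional variables. *)
Fixpoint feval (va : nat -> bool) (vb : form -> bool) (A : form) : bool :=
  match A with
  | FAtom p => va p
  | FBot => false
  | FTop => true
  | FNeg B => negb (feval va vb B)
  | FAnd B C => feval va vb B && feval va vb C
  | FOr B C => feval va vb B || feval va vb C
  | FImp B C => implb (feval va vb B) (feval va vb C)
  | FBox B => vb B
  end.

Definition ftaut (A : form) : Prop :=
  forall va vb, feval va vb A = true.

Fixpoint heval (va : nat -> bool) (vb : nat -> hform -> bool) (A : hform) : bool :=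
  match A with
  | HAtom p => va p
  | HBot => false
  | HTop => true
  | HNeg B => negb (heval va vb B)
  | HAnd B C => heval va vb B && heval va vb C
  | HOr B C => heval va vb B || heval va vb C
  | HImp B C => implb (heval va vb B) (heval va vb C)
  | HBox n B => vb n B
  end.

Definition htaut (A : hform) : Prop :=
  forall va vb, heval va vb A = true.

Inductive GL : form -> Prop :=
| GL_taut : forall A, ftaut A -> GL A
| GL_K : forall A B, GL (FImp (FBox (FImp A B)) (FImp (FBox A) (FBox B)))
| GL_4 : forall A, GL (FImp (FBox A) (FBox (FBox A)))
| GL_L : forall A, GL (FImp (FBox (FImp (FBox A) A)) (FBox A))
| GL_MP : forall A B, GL A -> GL (FImp A B) -> GL B
| GL_Nec : forall A, GL A -> GL (FBox A).

(* The logic GL_h; axiom instances are only the L_infty formulas. *)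
Inductive GLh : hform -> Prop :=
| GLh_taut : forall A, hwf A -> htaut A -> GLh A
| GLh_H : forall n A, hwf (HImp (HBox n A) (HBox (S n) A)) ->
    GLh (HImp (HBox n A) (HBox (S n) A))
| GLh_K : forall n A B,
    hwf (HImp (HBox n (HImp A B)) (HImp (HBox n A) (HBox n B))) ->
    GLh (HImp (HBox n (HImp A B)) (HImp (HBox n A) (HBox n B)))
| GLh_4 : forall n A, hwf (HImp (HBox n A) (HBox (S n) (HBox n A))) ->
    GLh (HImp (HBox n A) (HBox (S n) (HBox n A)))
| GLh_L : forall n A, hwf (HImp (HBox (S n) (HImp (HBox n A) A)) (HBox n A)) ->
    GLh (HImp (HBox (S n) (HImp (HBox n A) A)) (HBox n A))
| GLh_MP : forall A B, GLh A -> GLh (HImp A B) -> GLh B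
| GLh_Nec : forall n A, GLh A -> boxes_below n A -> GLh (HBox n A).

(* Derivability from a set of premises: /\Delta -> A in L for finite Delta <= Gamma
   (empty conjunction = Top). *)
Definition fconj (D : list form) : form := fold_right FAnd FTop D.
Definition hconj (D : list hform) : hform := fold_right HAnd HTop D.

Definition GL_derives (Gamma : form -> Prop) (A : form) : Prop :=
  exists D : list form, (forall B, In B D -> Gamma B) /\ GL (FImp (fconj D) A).

Definition GLh_derives (Gamma : hform -> Prop) (A : hform) : Prop :=
  exists D : list hform, (forall B, In B D -> Gamma B) /\ GLh (HImp (hconj D) A).

Fixpoint forget (A : hform) : form :=
  match A with
  | HAtom p => FAtom p
  | HBot => FBot
  | HTop => FTop
  | HNeg B => FNeg (forget B)
  | HAnd B C => FAnd (forget B) (forget C)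
  | HOr B C => FOr (forget B) (forget C)
  | HImp B C => FImp (forget B) (forget C)
  | HBox _ B => FBox (forget B)
  end.

Definition forget_set (Gamma : hform -> Prop) : form -> Prop :=
  fun C => exists B, Gamma B /\ forget B = C.

(* A witness for A (an assignment of numbers to the box occurrences of A,
   strictly decreasing into scopes) is represented by the labelled formula
   A(w) itself: an hform whose boxes carry the assigned numbers, whose
   forgetful image is A, and which satisfies the scope condition (hwf). *)
Definition is_witness (A : form) (Aw : hform) : Prop :=
  forget Aw = A /\ hwf Aw.

(* A witness v for a set Gamma: a witness v B for every B in Gamma;
   Gamma(v) = { B(v_B) : B in Gamma }. *)
Definition is_set_witness (Gamma : form -> Prop) (v : form -> hform) : Prop :=
  forall B, Gamma B -> is_witness B (v B).

Definition apply_set_witness (Gamma : form -> Prop) (v : form -> hform) : hform -> Prop :=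
  fun H => exists B, Gamma B /\ H = v B.

(* Forgetting indices sends every axiom of GL_h to an axiom of GL (H becomes
   the tautology Box A -> Box A) and every rule to a rule, which gives (i).
   For (ii), label every box of an L_Box formula by the modal depth of its
   scope; this canonical witness turns GL-theorems into GL_h-theorems.  Any
   two witnesses of a formula are GL_h-equivalent, because Box_k B and
   Box_m B are equivalent whenever both are L_infty formulas: upwards by H,
   downwards by L, since Box_(n+1) B proves Box_(n+1) (Box_n B -> B). *)
From Stdlib Require Import List Arith Lia.
Import ListNotations.

Lemma htaut_forget (A : hform) : htaut A -> ftaut (forget A).
Proof.
  intros HA va vb.
  rewrite <- (HA va (fun _ B => vb (forget B))); clear HA.
  induction A; simpl; congruence.
Qed.

Lemma GL_forget (A : hform) : GLh A -> GL (forget A).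
Proof.
  induction 1; simpl.
  - apply GL_taut, htaut_forget; assumption.
  - apply GL_taut; intros va vb; simpl; destruct (vb (forget A)); reflexivity.
  - apply GL_K.
  - apply GL_4.
  - apply GL_L.
  - exact (GL_MP _ _ IHGLh1 IHGLh2).
  - apply GL_Nec; assumption.
Qed.

Lemma forget_hconj (D : list hform) : forget (hconj D) = fconj (map forget D).
Proof. induction D; simpl; congruence. Qed.

Lemma GL_derives_forget (Gamma : hform -> Prop) (A : hform) :
  GLh_derives Gamma A -> GL_derives (forget_set Gamma) (forget A).
Proof.
  intros [D [HD HA]].
  exists (map forget D); split.
  - intros C HC; apply in_map_iff in HC as [B [<- HB]].
    exists B; auto.
  - rewrite <- forget_hconj; exact (GL_forget _ HA).
Qed.

Fixpoint depth (A : form) : nat :=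
  match A with
  | FAtom _ | FBot | FTop => 0
  | FNeg B => depth B
  | FAnd B C | FOr B C | FImp B C => Nat.max (depth B) (depth C)
  | FBox B => S (depth B)
  end.

Fixpoint can (A : form) : hform :=
  match A with
  | FAtom p => HAtom p
  | FBot => HBot
  | FTop => HTop
  | FNeg B => HNeg (can B)
  | FAnd B C => HAnd (can B) (can C)
  | FOr B C => HOr (can B) (can C)
  | FImp B C => HImp (can B) (can C)
  | FBox B => HBox (depth B) (can B)
  end.

Lemma boxes_below_mono (A : hform) (n m : nat) :
  n <= m -> boxes_below n A -> boxes_below m A.
Proof.
  intros Hnm; induction A; simpl; intros; try tauto; split; try lia; tauto.
Qed.

Lemma boxes_below_can (A : form) (n : nat) : depth A <= n -> boxes_below n (can A).
Proof.
  revert n; induction A; simpl; intros; repeat split; auto;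
    (apply IHA1 || apply IHA2 || apply IHA || idtac); lia.
Qed.

Lemma hwf_can (A : form) : hwf (can A).
Proof. induction A; simpl; auto using boxes_below_can. Qed.

Lemma forget_can (A : form) : forget (can A) = A.
Proof. induction A; simpl; congruence. Qed.

Lemma is_witness_can (A : form) : is_witness A (can A).
Proof. split; [apply forget_can | apply hwf_can]. Qed.

Lemma depth_forget_le (A : hform) (n : nat) :
  hwf A -> boxes_below n A -> depth (forget A) <= n.
Proof.
  revert n; induction A as [| | |B IH|B IHB C IHC|B IHB C IHC|B IHB C IHC|m B IH];
    simpl; intros k hA bA; try lia; auto.
  1-3: destruct hA, bA; apply Nat.max_lub; auto.
  destruct hA as [bB hB], bA as [Hmn _].
  specialize (IH m hB bB); lia.
Qed.

Lemma htaut_can (A : form) : ftaut A -> htaut (can A).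
Proof.
  intros HA va vb.
  rewrite <- (HA va (fun C => vb (depth C) (can C))); clear HA.
  induction A; simpl; congruence.
Qed.

Ltac solve_hwf :=
  simpl; repeat split; try assumption; try lia;
  try (eapply boxes_below_mono; [|eassumption]; lia);
  try apply hwf_can; try (apply boxes_below_can; lia).

Ltac solve_htaut :=
  intros va vb; simpl;
  repeat match goal with
  | |- context [heval ?a ?b ?X] => destruct (heval a b X)
  | |- context [vb ?n ?X] => destruct (vb n X)
  end; reflexivity.

Lemma GLh_imp_refl (A : hform) : hwf A -> GLh (HImp A A).
Proof. intros; apply GLh_taut; [solve_hwf | solve_htaut]. Qed.

Lemma GLh_imp_trans (A B C : hform) : hwf A -> hwf B -> hwf C ->
  GLh (HImp A B) -> GLh (HImp B C) -> GLh (HImp A C).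
Proof.
  intros hA hB hC HAB HBC.
  apply (GLh_MP _ _ HBC), (GLh_MP _ _ HAB).
  apply GLh_taut; [solve_hwf | solve_htaut].
Qed.

Lemma GLh_box_mono (n : nat) (A B : hform) : hwf A -> hwf B ->
  boxes_below n A -> boxes_below n B ->
  GLh (HImp A B) -> GLh (HImp (HBox n A) (HBox n B)).
Proof.
  intros hA hB bA bB HAB.
  apply (GLh_MP (HBox n (HImp A B))).
  - apply GLh_Nec; [assumption | solve_hwf].
  - apply GLh_K; solve_hwf.
Qed.

Lemma GLh_box_pred (n : nat) (A : hform) : hwf A -> boxes_below n A ->
  GLh (HImp (HBox (S n) A) (HBox n A)).
Proof.
  intros hA bA.
  apply GLh_imp_trans with (HBox (S n) (HImp (HBox n A) A)); try solve_hwf.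
  - apply GLh_box_mono; try solve_hwf.
    apply GLh_taut; [solve_hwf | solve_htaut].
  - apply GLh_L; solve_hwf.
Qed.

Lemma GLh_box_reindex (k m : nat) (A : hform) : hwf A ->
  boxes_below k A -> boxes_below m A -> GLh (HImp (HBox k A) (HBox m A)).
Proof.
  intros hA bk bm.
  destruct (Nat.le_ge_cases k m) as [Hkm | Hmk].
  - induction Hkm as [|m Hkm IH].
    + apply GLh_imp_refl; solve_hwf.
    + assert (bm' : boxes_below m A) by (eapply boxes_below_mono; eassumption).
      apply GLh_imp_trans with (HBox m A); try solve_hwf.
      * apply IH; assumption.
      * apply GLh_H; solve_hwf.
  - induction Hmk as [|k Hmk IH].
    + apply GLh_imp_refl; solve_hwf.
    + assert (bk' : boxes_below k A) by (eapply boxes_below_mono; eassumption).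
      apply GLh_imp_trans with (HBox k A); try solve_hwf.
      * apply GLh_box_pred; assumption.
      * apply IH; assumption.
Qed.

Lemma GLh_can (A : form) : GL A -> GLh (can A).
Proof.
  induction 1; cbn [can depth].
  - apply GLh_taut; [apply hwf_can | apply htaut_can; assumption].
  - set (m := Nat.max (depth A) (depth B)).
    pose proof (hwf_can A); pose proof (hwf_can B).
    assert (bA : boxes_below m (can A)) by (apply boxes_below_can; lia).
    assert (bB : boxes_below m (can B)) by (apply boxes_below_can; lia).
    assert (K : GLh (HImp (HBox m (HImp (can A) (can B)))
                     (HImp (HBox m (can A)) (HBox m (can B))))) by (apply GLh_K; solve_hwf).
    assert (up : GLh (HImp (HBox (depth A) (can A)) (HBox m (can A))))
      by (apply GLh_box_reindex; solve_hwf).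
    assert (down : GLh (HImp (HBox m (can B)) (HBox (depth B) (can B))))
      by (apply GLh_box_reindex; solve_hwf).
    apply (GLh_MP _ _ down), (GLh_MP _ _ up), (GLh_MP _ _ K).
    apply GLh_taut; [solve_hwf | solve_htaut].
  - pose proof (hwf_can A); apply GLh_4; solve_hwf.
  - replace (Nat.max (S (depth A)) (depth A)) with (S (depth A)) by lia.
    pose proof (hwf_can A); apply GLh_L; solve_hwf.
  - exact (GLh_MP _ _ IHGL1 IHGL2).
  - apply GLh_Nec; [assumption | solve_hwf].
Qed.

Lemma GLh_can_forget (A : hform) : hwf A ->
  GLh (HImp A (can (forget A))) /\ GLh (HImp (can (forget A)) A).
Proof.
  induction A as [p| | |B IH|B IHB C IHC|B IHB C IHC|B IHB C IHC|n B IH];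
    simpl; intros hA.
  1-3: split; apply GLh_imp_refl; solve_hwf.
  2-4: destruct hA as [hB hC], (IHB hB) as [toB fromB], (IHC hC) as [toC fromC];
    pose proof (hwf_can (forget B)); pose proof (hwf_can (forget C)).
  2-3: split; [apply (GLh_MP _ _ toC), (GLh_MP _ _ toB)
              | apply (GLh_MP _ _ fromC), (GLh_MP _ _ fromB)];
    apply GLh_taut; solve_hwf || solve_htaut.
  - destruct (IH hA) as [to from]; pose proof (hwf_can (forget B)).
    split; [apply (GLh_MP _ _ from) | apply (GLh_MP _ _ to)];
      apply GLh_taut; solve_hwf || solve_htaut.
  - split; [apply (GLh_MP _ _ toC), (GLh_MP _ _ fromB)
           | apply (GLh_MP _ _ fromC), (GLh_MP _ _ toB)];
      apply GLh_taut; solve_hwf || solve_htaut.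
  - destruct hA as [bB hB], (IH hB) as [to from].
    pose proof (hwf_can (forget B)).
    pose proof (depth_forget_le B n hB bB).
    assert (bc : boxes_below n (can (forget B))) by (apply boxes_below_can; lia).
    split.
    + apply GLh_imp_trans with (HBox n (can (forget B))); try solve_hwf.
      * apply GLh_box_mono; assumption.
      * apply GLh_box_reindex; solve_hwf.
    + apply GLh_imp_trans with (HBox n (can (forget B))); try solve_hwf.
      * apply GLh_box_reindex; solve_hwf.
      * apply GLh_box_mono; assumption.
Qed.

Lemma GLh_witness_imp (A : form) (X Y : hform) :
  is_witness A X -> is_witness A Y -> GLh (HImp X Y).
Proof.
  intros [<- hX] [eY hY].
  apply GLh_imp_trans with (can (forget X)); auto using hwf_can.
  - apply GLh_can_forget; assumption.
  - rewrite <- eY; apply GLh_can_forget; assumption.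
Qed.

Lemma GLh_witness (A : form) (Aw : hform) : GL A -> is_witness A Aw -> GLh Aw.
Proof.
  intros HA HAw.
  exact (GLh_MP _ _ (GLh_can A HA) (GLh_witness_imp _ _ _ (is_witness_can A) HAw)).
Qed.

Lemma is_witness_hconj (Gamma : form -> Prop) (v : form -> hform) (D : list form) :
  is_set_witness Gamma v -> (forall B, In B D -> Gamma B) ->
  is_witness (fconj D) (hconj (map v D)).
Proof.
  intros Hv; induction D as [|B D IH]; simpl; intros HD.
  - split; simpl; auto.
  - destruct (Hv B (HD B (or_introl eq_refl))) as [eB hB].
    destruct IH as [eD hD]; auto.
    split; simpl; [congruence | auto].
Qed.

Lemma GLh_derives_witness (Gamma : form -> Prop) (A : form) (v : form -> hform)
  (Aw : hform) : is_set_witness Gamma v -> is_witness A Aw ->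
  GL_derives Gamma A -> GLh_derives (apply_set_witness Gamma v) Aw.
Proof.
  intros Hv HAw [D [HD HA]].
  exists (map v D); split.
  - intros C HC; apply in_map_iff in HC as [B [<- HB]].
    exists B; auto.
  - destruct (is_witness_hconj Gamma v D Hv HD) as [eD hD], HAw as [eA hA].
    apply (GLh_witness _ _ HA); split; simpl; [congruence | auto].
Qed.

Theorem theorem3p13 :
  (forall (Gamma : hform -> Prop) (A : hform),
      (forall B, Gamma B -> hwf B) -> hwf A ->
      GLh_derives Gamma A -> GL_derives (forget_set Gamma) (forget A))
  /\
  (forall (Gamma : form -> Prop) (A : form) (v : form -> hform) (Aw : hform),
      is_set_witness Gamma v -> is_witness A Aw ->
      GL_derives Gamma A -> GLh_derives (apply_set_witness Gamma v) Aw).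
Proof.
  split.
  - intros Gamma A _ _; apply GL_derives_forget.
  - exact GLh_derives_witness.
Qed.
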